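(* $\mathrm{Cl}_q(n,1/2)\cong\mathrm{Cl}(\mathbb{k}^n\oplus(\mathbb{k}^n)^* )$ as $\mathbb{k}$-algebras, where the right side is the classical Clifford algebra generated by $v_1,\dots,v_n,v_1^*,\dots,v_n^*$ subject to $v_av_b+v_bv_a=v_a^*v_b^*+v_b^*v_a^*=0$ and $v_av_b^*+v_b^*v_a=\delta_{ab}$.
   Context: Let $\mathbb{k}$ be a field of characteristic different from $2$, $q\in\mathbb{k}^\times$, $n$ a positive integer. $\mathrm{Cl}_q(n,1/2)$ is the unital associative $\mathbb{k}$-algebra generated by $\omega_a,\phi_a,\phi_a^*$ ($a=1,\dots,n$) subject to, for all $a,b$: $\omega_a\omega_b=\omega_b\omega_a$; $\omega_a^{2}=(1+q^{-1})\omega_a-q^{-1}$; $\omega_a\phi_b=q^{\delta_{ab}}\phi_b\omega_a$; $\omega_a\phi_b^*=q^{-\delta_{ab}}\phi_b^*\omega_a$; $\phi_a\phi_b+\phi_b\phi_a=0$; $\phi_a^*\phi_b^*+\phi_b^*\phi_a^*=0$; $\phi_a\phi_a^*+\phi_a^*\phi_a=1$; $\phi_a\phi_a^*+q^{-1}\phi_a^*\phi_a=\omega_a$; $\phi_a\phi_b^*+\phi_b^*\phi_a=0$ if $a\neq b$ (this is the case $k=1/2$ of the half-twist quantum Clifford algebra, whose relations are those with $\omega_a^{4k}=(1+q^{-2k})\omega_a^{2k}-q^{-2k}$ and $\phi_a\phi_a^*+q^{-2k}\phi_a^*\phi_a=\omega_a^{2k}$). *)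

From HB Require Import structures.
From mathcomp Require Import all_boot all_order all_algebra.
Set Implicit Arguments. Unset Strict Implicit. Unset Printing Implicit Defensive.
Import GRing.Theory.
Local Open Scope ring_scope.

Definition alg_hom (k : fieldType) (A B : algType k) (f : A -> B) : Prop :=
  [/\ forall x y, f (x + y) = f x + f y,
      forall (c : k) x, f (c *: x) = c *: f x,
      forall x y, f (x * y) = f x * f y
    & f 1 = 1].

(* Defining relations of Cl_q(n,1/2) on elements w, p, ps : 'I_n -> A
   (w = omega, p = phi, ps = phi^* ). *)
Definition Clq_rels (k : fieldType) (q : k) (n : nat) (A : algType k)
    (w p ps : 'I_n -> A) : Prop :=
  forall a b : 'I_n,
  [/\ w a * w b = w b * w a,
      w a ^+ 2 = (1 + q^-1) *: w a - q^-1%:A,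
      w a * p b = q ^+ (a == b) *: (p b * w a)
    & w a * ps b = (q^-1) ^+ (a == b) *: (ps b * w a)] /\
  [/\ p a * p b + p b * p a = 0,
      ps a * ps b + ps b * ps a = 0,
      p a * ps a + ps a * p a = 1,
      p a * ps a + q^-1 *: (ps a * p a) = w a
    & a != b -> p a * ps b + ps b * p a = 0].

Definition is_Clq (k : fieldType) (q : k) (n : nat) (A : algType k)
    (w p ps : 'I_n -> A) : Prop :=
  Clq_rels q w p ps /\
  forall (B : algType k) (w' p' ps' : 'I_n -> B), Clq_rels q w' p' ps' ->
    (exists f : A -> B, alg_hom f /\
       forall a, [/\ f (w a) = w' a, f (p a) = p' a & f (ps a) = ps' a]) /\
    (forall f g : A -> B, alg_hom f -> alg_hom g ->
       (forall a, [/\ f (w a) = g (w a), f (p a) = g (p a) & f (ps a) = g (ps a)]) ->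
       f =1 g).

Definition Cliff_rels (k : fieldType) (n : nat) (A : algType k)
    (v vs : 'I_n -> A) : Prop :=
  forall a b : 'I_n,
  [/\ v a * v b + v b * v a = 0,
      vs a * vs b + vs b * vs a = 0
    & v a * vs b + vs b * v a = (a == b)%:R].

Definition is_Cliff (k : fieldType) (n : nat) (A : algType k)
    (v vs : 'I_n -> A) : Prop :=
  Cliff_rels v vs /\
  forall (B : algType k) (v' vs' : 'I_n -> B), Cliff_rels v' vs' ->
    (exists f : A -> B, alg_hom f /\
       forall a, f (v a) = v' a /\ f (vs a) = vs' a) /\
    (forall f g : A -> B, alg_hom f -> alg_hom g ->
       (forall a, f (v a) = g (v a) /\ f (vs a) = g (vs a)) -> f =1 g).

From mathcomp Require Import all_boot all_order all_algebra.
From mathcomp Require Import ring.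
Set Implicit Arguments. Unset Strict Implicit. Unset Printing Implicit Defensive.
Import GRing.Theory.
Local Open Scope ring_scope.

(* For k = 1/2 the relation phi_a phi_a^* + q^-1 phi_a^* phi_a = omega_a
   expresses omega_a through phi_a and phi_a^*, and the phi's and phi^*'s
   satisfy the Clifford relations.  Conversely, in Cl(k^n (+) (k^n)^* ) put
   omega_a := v_a v_a^* + q^-1 v_a^* v_a.  Since 2 is invertible, v_a^2 =
   v_a^*^2 = 0, so e := v_a v_a^* is idempotent and omega_a = q^-1 + (1 - q^-1) e
   satisfies the quadratic relation and omega_a v_a = v_a = q v_a omega_a (and
   dually for v_a^* ); the v_b, v_b^* with b != a anticommute with v_a and
   v_a^*, hence commute with omega_a.  The two universal properties then give
   mutually inverse algebra homomorphisms. *)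

Section AlgHom.

Variable k : fieldType.

Lemma alg_hom_id (A : algType k) : alg_hom (@id A).
Proof. by []. Qed.

Lemma alg_hom_comp (A B C : algType k) (f : A -> B) (g : B -> C) :
  alg_hom f -> alg_hom g -> alg_hom (g \o f).
Proof.
move=> [fD fZ fM f1] [gD gZ gM g1]; split=> /= [x y|c x|x y|];
  by rewrite ?fD ?gD ?fZ ?gZ ?fM ?gM ?f1 ?g1.
Qed.

End AlgHom.

Section AlgebraIdentities.

Variables (k : fieldType) (A : algType k).
Implicit Types (x y z : A) (a b c d : k).

Lemma anticomm_self_sqr0 x : (2%:R : k) != 0 -> x * x + x * x = 0 -> x * x = 0.
Proof.
move=> k2 xx0; apply: (scalerI k2).
by rewrite scaler0 scaler_nat mulr2n.
Qed.

Lemma anticommE x z : x * z + z * x = 0 -> z * x = - (x * z).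
Proof. by move=> xz0; apply/eqP; rewrite -addr_eq0 addrC xz0. Qed.

Lemma anticomm_commM x y z :
  x * z + z * x = 0 -> y * z + z * y = 0 -> GRing.comm z (x * y).
Proof.
move=> /anticommE zx /anticommE zy.
by rewrite /GRing.comm mulrA zx mulNr -[x * z * y]mulrA zy mulrN opprK mulrA.
Qed.

Lemma commrZ z x c : GRing.comm z x -> GRing.comm z (c *: x).
Proof. by rewrite /GRing.comm -scalerAl -scalerAr => ->. Qed.

Lemma mul_alg_idem (e : A) a b c d : e * e = e ->
  (a%:A + b *: e) * (c%:A + d *: e) = (a * c)%:A + (a * d + b * c + b * d) *: e.
Proof.
move=> ee; rewrite mulrDl !mulrDr mulr_algl mulr_algr mulr_algl.
by rewrite -scalerAl -scalerAr ee !scalerA !scalerDl !addrA (mulrC c b).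
Qed.

End AlgebraIdentities.

Definition clq_omega (k : fieldType) (A : algType k) (c : k) (x y : A) : A :=
  x * y + c *: (y * x).

Section FermionPair.

Variables (k : fieldType) (A : algType k) (c : k) (x y : A).
Hypotheses (xx0 : x * x = 0) (yy0 : y * y = 0) (xy_anti : x * y + y * x = 1).

Let omega := clq_omega c x y.

Lemma fermion_mulyx : y * x = 1 - x * y.
Proof. by rewrite -xy_anti addrAC subrr add0r. Qed.

Lemma fermion_idem : (x * y) * (x * y) = x * y.
Proof.
by rewrite -mulrA (mulrA y) fermion_mulyx mulrBl mul1r mulrBr -!mulrA yy0 !mulr0 subr0.
Qed.

Lemma clq_omegaE : omega = c%:A + (1 - c) *: (x * y).
Proof. by rewrite /omega /clq_omega fermion_mulyx scalerBr scalerBl scale1r addrCA addrA. Qed.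

Lemma clq_omega_sqr : omega ^+ 2 = (1 + c) *: omega - c%:A.
Proof.
rewrite clq_omegaE expr2 mul_alg_idem ?fermion_idem //.
rewrite scalerDr !scalerA [in RHS]addrAC -scalerBl.
by congr (_ + _); congr (_ *: _); ring.
Qed.

Lemma clq_omega_mulx : omega * x = x.
Proof.
rewrite clq_omegaE mulrDl mulr_algl -scalerAl -mulrA fermion_mulyx.
by rewrite mulrBr mulr1 mulrA xx0 mul0r subr0 -scalerDl addrC subrK scale1r.
Qed.

Lemma mulx_clq_omega : x * omega = c *: x.
Proof. by rewrite clq_omegaE mulrDr mulr_algr -scalerAr mulrA xx0 mul0r scaler0 addr0. Qed.

Lemma clq_omega_muly : omega * y = c *: y.
Proof. by rewrite clq_omegaE mulrDl mulr_algl -scalerAl -mulrA yy0 mulr0 scaler0 addr0. Qed.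

Lemma muly_clq_omega : y * omega = y.
Proof.
rewrite clq_omegaE mulrDr mulr_algr -scalerAr mulrA fermion_mulyx.
by rewrite mulrBl mul1r -mulrA yy0 mulr0 subr0 -scalerDl addrC subrK scale1r.
Qed.

End FermionPair.

Section OmegaCommutation.

Variables (k : fieldType) (A : algType k).
Implicit Types (x y z : A) (c : k).

Lemma comm_clq_omega x y z c :
  GRing.comm x z -> GRing.comm y z -> GRing.comm (clq_omega c x y) z.
Proof.
move=> xz yz; apply: commr_sym; apply: commrD; last apply: commrZ;
  by apply: commrM; apply: commr_sym.
Qed.

Lemma anticomm_comm_clq_omega x y z c :
  x * z + z * x = 0 -> y * z + z * y = 0 -> GRing.comm z (clq_omega c x y).
Proof.
move=> xz yz; rewrite /clq_omega; apply: commrD; last apply: commrZ;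
  exact: anticomm_commM.
Qed.

Lemma alg_hom_clq_omega (B : algType k) (f : A -> B) c x y :
  alg_hom f -> f (clq_omega c x y) = clq_omega c (f x) (f y).
Proof. by move=> [fD fZ fM _]; rewrite /clq_omega fD fZ !fM. Qed.

End OmegaCommutation.

Section ClqCliff.

Variables (k : fieldType) (q : k) (n : nat).

Lemma Clq_rels_Cliff_rels (A : algType k) (w p ps : 'I_n -> A) :
  Clq_rels q w p ps -> Cliff_rels p ps.
Proof.
move=> R a b; have [_ [pp psps pps _ ppsD]] := R a b; split=> //.
by case: (eqVneq a b) => [<- | /ppsD //]; have [_ [_ _ -> _ _]] := R a a.
Qed.

Lemma Clq_rels_omegaE (A : algType k) (w p ps : 'I_n -> A) a :
  Clq_rels q w p ps -> w a = clq_omega q^-1 (p a) (ps a).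
Proof. by move=> R; have [_ [_ _ _ <- _]] := R a a. Qed.

Hypotheses (k2 : (2%:R : k) != 0) (q0 : q != 0).

Lemma Cliff_rels_fermion (A : algType k) (v vs : 'I_n -> A) a :
  Cliff_rels v vs ->
  [/\ v a * v a = 0, vs a * vs a = 0 & v a * vs a + vs a * v a = 1].
Proof.
move=> R; have [vv svs vvs] := R a a.
by rewrite eqxx in vvs; split=> //; apply: anticomm_self_sqr0.
Qed.

Lemma Cliff_rels_Clq_rels (A : algType k) (v vs : 'I_n -> A) :
  Cliff_rels v vs -> Clq_rels q (fun a => clq_omega q^-1 (v a) (vs a)) v vs.
Proof.
move=> R a b; have [vv0 svs0 vvs1] := Cliff_rels_fermion a R.
case: (eqVneq a b) => [<- | ab].
  rewrite !expr1; split; split=> //; rewrite ?vv0 ?svs0 ?addr0 //.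
  - exact: clq_omega_sqr.
  - by rewrite clq_omega_mulx // mulx_clq_omega // scalerA mulfV // scale1r.
  - by rewrite clq_omega_muly // muly_clq_omega.
have [vab svsab vvsab] := R a b; have [_ _ vvsba] := R b a.
rewrite (negbTE ab) in vvsab; rewrite eq_sym (negbTE ab) in vvsba.
rewrite addrC in vvsba.
have vb_omega := anticomm_comm_clq_omega q^-1 vab vvsba.
have svsb_omega := anticomm_comm_clq_omega q^-1 vvsab svsab.
rewrite !expr0 !scale1r; split; split=> //; last exact: clq_omega_sqr.
exact/commr_sym/comm_clq_omega.
Qed.

Lemma is_Clq_endo_eq_id (A : algType k) (w p ps : 'I_n -> A) (h : A -> A) :
  is_Clq q w p ps -> alg_hom h ->
  (forall a, [/\ h (w a) = w a, h (p a) = p a & h (ps a) = ps a]) -> h =1 id.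
Proof.
move=> [R U] hh hgen; have [_ uniq] := U A w p ps R.
exact: uniq hh (alg_hom_id A) hgen.
Qed.

Lemma is_Cliff_endo_eq_id (A : algType k) (v vs : 'I_n -> A) (h : A -> A) :
  is_Cliff v vs -> alg_hom h ->
  (forall a, h (v a) = v a /\ h (vs a) = vs a) -> h =1 id.
Proof.
move=> [R U] hh hgen; have [_ uniq] := U A v vs R.
exact: uniq hh (alg_hom_id A) hgen.
Qed.

End ClqCliff.

Theorem theorem5p3 (k : fieldType) (q : k) (n : nat) :
  (2%:R : k) != 0 -> q != 0 -> (0 < n)%N ->
  forall (A : algType k) (w p ps : 'I_n -> A), is_Clq q w p ps ->
  forall (C : algType k) (v vs : 'I_n -> C), is_Cliff v vs ->
  exists f : A -> C, alg_hom f /\ bijective f.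
Proof.
move=> k2 q0 _ A w p ps ClqA C v vs CliffC.
have [wpsR univA] := ClqA; have [vvsR univC] := CliffC.
have [[f [fhom fgen]] _] := univA C _ _ _ (Cliff_rels_Clq_rels k2 q0 vvsR).
have [[g [ghom ggen]] _] := univC A _ _ (Clq_rels_Cliff_rels wpsR).
exists f; split=> //; exists g.
- apply: (is_Clq_endo_eq_id ClqA (alg_hom_comp fhom ghom)) => a /=.
  have [-> -> ->] := fgen a; have [gv gvs] := ggen a.
  by rewrite alg_hom_clq_omega // gv gvs -(Clq_rels_omegaE a wpsR).
- apply: (is_Cliff_endo_eq_id CliffC (alg_hom_comp ghom fhom)) => a /=.
  by have [-> ->] := ggen a; have [_ -> ->] := fgen a.
Qed.
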